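(* Let $p\ge2$ be an integer. (1) (With bias.) There exist $W\in\mathbb{R}^{2\times p}$, $V\in\mathbb{R}^{p\times 2}$, $b\in\mathbb{R}^2$ such that the network $s^\theta(x)=V\sin(Wx+b)$ satisfies $\mathbb{P}_{(X,Y)\sim\mathcal{D}_m}[h_\theta(X)=Y]=1$ for every integer $m\ge2$. (2) (Without bias.) Let $d=\lfloor (p-1)/2\rfloor$. There exist $W\in\mathbb{R}^{d\times p}$, $V\in\mathbb{R}^{p\times d}$ such that the network $s^\theta(x)=V\sin(Wx)$ satisfies, for every integer $m\ge 2$: if $p$ is odd then $\mathbb{P}_{(X,Y)\sim\mathcal{D}_m}[h_\theta(X)=Y]\ge 1-\frac1p$, and if $p$ is even then $\mathbb{P}_{(X,Y)\sim\mathcal{D}_m}[h_\theta(X)=Y]\ge 1-\frac2p$.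
   Context: Let $[p]=\{0,1,\dots,p-1\}$ and let $e_r$ ($r\in[p]$) be the standard basis vectors of $\mathbb{R}^p$. For an integer $m\ge1$, let $\mathcal{X}_m=\{x\in\{0,1,\dots,m\}^p:\ \|x\|_1=m\}$. The distribution $\mathcal{D}_m$ on $\mathcal{X}_m\times[p]$ is that of $(X,Y)$ where $s_1,\dots,s_m$ are i.i.d. uniform on $[p]$, $X=\sum_{i=1}^m e_{s_i}$ and $Y=(\sum_{i=1}^m s_i)\bmod p$. The function $\sin$ is applied entrywise. For a score vector $s^\theta(x)\in\mathbb{R}^p$ with coordinates indexed by $[p]$, the predictor is $h_\theta(x)=\ell$ if $s^\theta_\ell(x)>s^\theta_k(x)$ for all $k\ne\ell$, and $h_\theta(x)=\bot$ (an invalid prediction, never equal to any label) otherwise. *)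

From HB Require Import structures.
From mathcomp Require Import all_boot all_order all_algebra.
From mathcomp Require Import all_classical all_reals all_analysis.
Set Implicit Arguments. Unset Strict Implicit. Unset Printing Implicit Defensive.
Import Order.TTheory GRing.Theory Num.Theory.
Local Open Scope ring_scope.

Section Defs.
Variable R : realType.

Definition e_vec (p : nat) (r : 'I_p) : 'cV[R]_p := delta_mx r ord0.

Definition sampleX (p m : nat) (s : m.-tuple 'I_p) : 'cV[R]_p :=
  \sum_(i < m) e_vec (tnth s i).

Definition sampleY (p m : nat) (s : m.-tuple 'I_p) : nat :=
  ((\sum_(i < m) nat_of_ord (tnth s i)) %% p)%N.

Definition sin_mx (n : nat) (A : 'cV[R]_n) : 'cV[R]_n := map_mx sin A.

(* predictor: Some l if l is the unique strict argmax of the scores, None (= bot) otherwise *)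
Definition predictor (p : nat) (sc : 'cV[R]_p) : option 'I_p :=
  [pick l : 'I_p | [forall k : 'I_p, (k != l) ==> (sc k ord0 < sc l ord0)]].

Definition correct (p : nat) (sc : 'cV[R]_p) (y : nat) : bool :=
  if predictor sc is Some l then nat_of_ord l == y else false.

(* P_{(X,Y) ~ D_m}[h(X) = Y] where s_1..s_m iid uniform on [p] *)
Definition accuracy (p m : nat) (score : 'cV[R]_p -> 'cV[R]_p) : R :=
  (\sum_(s : m.-tuple 'I_p) (correct (score (sampleX s)) (sampleY s))%:R)
    / (p ^ m)%:R.

Definition net_bias (p k : nat) (W : 'M[R]_(k, p)) (V : 'M[R]_(p, k)) (b : 'cV[R]_k)
  (x : 'cV[R]_p) : 'cV[R]_p := V *m sin_mx (W *m x + b).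

Definition net_nobias (p k : nat) (W : 'M[R]_(k, p)) (V : 'M[R]_(p, k))
  (x : 'cV[R]_p) : 'cV[R]_p := V *m sin_mx (W *m x).

End Defs.

From HB Require Import structures.
From mathcomp Require Import all_boot all_order all_algebra.
From mathcomp Require Import all_classical all_reals all_analysis.
From mathcomp Require Import ring lra zify.

(* Let theta n = 2 pi n / p. The hidden pre-activations are sums of angles
   k theta s_i (plus a bias), and sin is 2 pi-periodic, so the hidden layer only
   sees theta Y.
   With biases 0 and pi/2 the two hidden units of the first network compute
   sin (theta Y) and cos (theta Y); with (sin (theta l), cos (theta l)) as the
   l-th row of V, label l scores cos (theta l - theta Y), uniquely maximal at l = Y.
   Without bias only sines are available: the units of frequency 1 and 2 give
   sin (theta Y) and sin (2 theta Y) = 2 sin (theta Y) cos (theta Y). The row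
   sg (sin (theta l)) * (3 - cos (theta l)^2, cos (theta l)) gives label l the
   score sg (sin (theta l)) sin (theta Y) (3 + c^2 - (cos (theta l) - c)^2), where
   c = cos (theta Y). It is uniquely maximal at l = Y unless sin (theta Y) = 0,
   i.e. unless Y = 0 or 2 Y = p, and each value of Y has probability 1/p.
   (For p <= 4 there is no frequency-2 unit, but then the sign of the sine alone
   separates the labels with sin (theta l) <> 0.) *)

Set Implicit Arguments.
Unset Strict Implicit.
Unset Printing Implicit Defensive.

Import Order.TTheory GRing.Theory Num.Theory.
Local Open Scope ring_scope.

Lemma pi2_gt0 (R : realType) : 0 < pi *+ 2 :> R.
Proof. by rewrite mulrn_wgt0 // pi_gt0. Qed.

Lemma cos_lt1 (R : realType) (x : R) : 0 < x < pi *+ 2 -> cos x < 1.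
Proof.
move=> /andP[x_gt0 x_lt2pi].
have sin_half_gt0 : 0 < sin (x / 2).
  apply: sin_gt0_pi; rewrite divr_gt0 //= ltr_pdivrMr // mulr_natr //.
have two_neq0 : (2 : R) != 0 by rewrite pnatr_eq0.
rewrite -[x](mulfVK two_neq0) mulr_natr cos_mulr2n cos2sin2.
have := mulr_gt0 sin_half_gt0 sin_half_gt0; rewrite -expr2 -mulr_natr; lra.
Qed.

Lemma cos_sqr_le1 (R : realType) (x : R) : cos x ^+ 2 <= 1.
Proof. by rewrite cos2sin2 lerBlDr lerDl sqr_ge0. Qed.

Section RegularPolygon.
Variables (R : realType) (p : nat).
Hypothesis p_gt0 : (0 < p)%N.

Definition theta (n : nat) : R := pi *+ 2 * n%:R / p%:R.

Lemma theta_p : theta p = pi *+ 2.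
Proof. by rewrite /theta mulfK // pnatr_eq0 -lt0n. Qed.

Lemma thetaD a b : theta (a + b) = theta a + theta b.
Proof. by rewrite /theta natrD mulrDr mulrDl. Qed.

Lemma thetaM a b : theta (a * b) = a%:R * theta b.
Proof. by rewrite /theta natrM; ring. Qed.

Lemma thetaB a b : (b <= a)%N -> theta (a - b) = theta a - theta b.
Proof. by move=> ba; rewrite /theta natrB // mulrBr mulrBl. Qed.

Lemma theta_sum m (f : 'I_m -> nat) : theta (\sum_(j < m) f j) = \sum_(j < m) theta (f j).
Proof. by rewrite /theta natr_sum mulr_sumr mulr_suml. Qed.

Lemma theta_gt0 n : (0 < n)%N -> 0 < theta n.
Proof. by move=> n_gt0; rewrite /theta divr_gt0 ?mulr_gt0 ?ltr0n ?pi2_gt0. Qed.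

Lemma theta_lt2pi n : (n < p)%N -> theta n < pi *+ 2.
Proof.
by move=> n_lt; rewrite /theta ltr_pdivrMr ?ltr0n // ltr_pM2l ?ltr_nat ?pi2_gt0.
Qed.

Lemma theta_modn n : theta n = theta (n %% p) + pi *+ 2 *+ (n %/ p).
Proof. by rewrite {1}(divn_eq n p) thetaD addrC thetaM theta_p mulr_natl. Qed.

Lemma sin_theta_eqmod a b : a = b %[mod p] -> sin (theta a) = sin (theta b).
Proof. by move=> ab; rewrite theta_modn (theta_modn b) !(periodicn (@sinD2pi R)) ab. Qed.

Lemma cos_theta_subr_lt1 a b : (a < p)%N -> (b < p)%N -> a != b ->
  cos (theta a - theta b) < 1.
Proof.
wlog ba : a b / (b < a)%N => [wlog_ab|] a_lt b_lt neq_ab.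
  case: (ltngtP a b) => [ab|ba|eq_ab].
  - by rewrite -cosN opprB wlog_ab // eq_sym.
  - exact: wlog_ab.
  - by rewrite eq_ab eqxx in neq_ab.
rewrite -thetaB; last exact: ltnW.
apply: cos_lt1; rewrite theta_gt0 ?subn_gt0 //= theta_lt2pi //.
exact: leq_ltn_trans (leq_subr _ _) a_lt.
Qed.

Lemma sin_cos_theta_inj a b : (a < p)%N -> (b < p)%N ->
  sin (theta a) = sin (theta b) -> cos (theta a) = cos (theta b) -> a = b.
Proof.
move=> a_lt b_lt eq_sin eq_cos; apply/eqP/negPn/negP => /(cos_theta_subr_lt1 a_lt b_lt).
by rewrite cosB eq_sin eq_cos -!expr2 cos2Dsin2 ltxx.
Qed.

Lemma sin_theta_gt0 n : (0 < n)%N -> (n.*2 < p)%N -> 0 < sin (theta n).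
Proof.
move=> n_gt0 n2_lt; apply: sin_gt0_pi; rewrite theta_gt0 //=.
rewrite /theta ltr_pdivrMr ?ltr0n //.
have : (n.*2)%:R < p%:R :> R by rewrite ltr_nat.
rewrite -muln2 natrM; have := pi_gt0 R; nra.
Qed.

Lemma sin_theta_subn n : (n <= p)%N -> sin (theta (p - n)) = - sin (theta n).
Proof. by move=> n_le; rewrite thetaB // theta_p addrC sinD2pi sinN. Qed.

Lemma sin_theta_lt0 n : (p < n.*2)%N -> (n < p)%N -> sin (theta n) < 0.
Proof.
move=> p_lt n_lt; rewrite -oppr_gt0 -sin_theta_subn; last exact: ltnW.
by apply: sin_theta_gt0; lia.
Qed.

Lemma sin_theta_neq0 n : (n < p)%N -> (sin (theta n) != 0) = (n != 0%N) && (n.*2 != p).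
Proof.
move=> n_lt; case: (posnP n) => [->|n_gt0].
  by rewrite /theta mulr0 mul0r sin0 eqxx.
case: (ltngtP n.*2 p) => [n2_lt|p_lt|n2_eq].
- by rewrite gt_eqF ?sin_theta_gt0.
- by rewrite lt_eqF ?sin_theta_lt0.
have -> : theta n = pi.
  by rewrite /theta -n2_eq -muln2 natrM; field; rewrite pnatr_eq0 -lt0n.
by rewrite sinpi eqxx.
Qed.

Lemma sgr_sin_theta_eq a b : (a < p)%N -> (b < p)%N -> a != b ->
  sin (theta b) != 0 -> Num.sg (sin (theta a)) = Num.sg (sin (theta b)) ->
  (4 < p)%N /\ cos (theta a) != cos (theta b).
Proof.
move=> a_lt b_lt neq_ab Sb_neq0 eq_sg.
have not_opp : sin (theta a) <> - sin (theta b).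
  by move=> Sa_opp; move: eq_sg Sb_neq0; rewrite Sa_opp sgrN -sgr_eq0; lra.
have Sa_neq0 : sin (theta a) != 0.
  by apply: contraNneq Sb_neq0 => Sa0; rewrite -sgr_eq0 -eq_sg Sa0 sgr0.
split.
  (* for p <= 4 the only labels with a nonzero sine are 1 and p - 1 *)
  rewrite ltnNge; apply/negP => p_le4; apply: not_opp.
  move: Sa_neq0 Sb_neq0; rewrite !sin_theta_neq0 // => /andP[a_neq0 a2_neq] /andP[b_neq0 b2_neq].
  have -> : a = (p - b)%N by lia.
  by rewrite sin_theta_subn // ltnW.
apply: contra_neq neq_ab => eq_cos.
have : sin (theta a) ^+ 2 = sin (theta b) ^+ 2 by rewrite !sin2cos2 eq_cos.
move/eqP; rewrite eqf_sqr => /orP[/eqP eq_sin | /eqP /not_opp //].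
exact: sin_cos_theta_inj.
Qed.

End RegularPolygon.

Section NobiasScore.
Variable R : realType.

(* The score of label l on an input of label y, where sl, cl, sy, cy are the sines
   and cosines of theta l and theta y; b says whether the hidden layer has the
   frequency-2 unit, which it has only for p >= 5. *)
Definition nobias_score (b : bool) (sl cl sy cy : R) : R :=
  Num.sg sl * sy * (3 - cl ^+ 2 + (if b then 2 * cl * cy else 0)).

Lemma nobias_score_lt (b : bool) (sl cl sy cy : R) :
  sy != 0 -> cl ^+ 2 <= 1 -> cy ^+ 2 <= 1 ->
  (Num.sg sl = Num.sg sy -> b /\ cl != cy) ->
  nobias_score b sl cl sy cy < nobias_score b sy cy sy cy.
Proof.
move=> sy_neq0 cl_le1 cy_le1 same_sg; rewrite /nobias_score.
have sy_sg : 0 < Num.sg sy * sy by rewrite -normrEsg normr_gt0.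
have [eq_sg|neq_sg] := eqVneq (Num.sg sl) (Num.sg sy).
  (* the gap is then |sy| (cl - cy)^2 *)
  have [-> cl_neq] := same_sg eq_sg; rewrite eq_sg.
  have : 0 < (cl - cy) ^+ 2 by rewrite exprn_even_gt0 //= subr_eq0.
  nra.
have [Gy_gt0 Gl_ge0] : 0 < 3 - cy ^+ 2 + (if b then 2 * cy * cy else 0) /\
                       0 <= 3 - cl ^+ 2 + (if b then 2 * cl * cy else 0).
  by case: b {same_sg}; split; nra.
have sl_sg_le0 : Num.sg sl * sy <= 0.
  by move: neq_sg; case: (sgrP sl) => hl; case: (sgrP sy) => hy; rewrite ?eqxx // => _; nra.
nra.
Qed.

End NobiasScore.

Section Accuracy.
Variables (R : realType) (p : nat).
Hypothesis p_gt0 : (0 < p)%N.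

Lemma correct_argmax (sc : 'cV[R]_p) (y : nat) (y_lt : (y < p)%N) :
  (forall k : 'I_p, val k != y -> sc k ord0 < sc (Ordinal y_lt) ord0) -> correct sc y.
Proof.
move=> y_max; rewrite /correct /predictor.
case: pickP => [l /forallP l_max | no_max].
  apply: contraT => l_neq; have y_neq : Ordinal y_lt != l by apply: contraNneq l_neq => <-.
  by have := lt_trans (y_max l l_neq) (implyP (l_max _) y_neq); rewrite ltxx.
rewrite -(no_max (Ordinal y_lt)); apply/forallP => k; apply/implyP => k_neq.
by apply: y_max; apply: contraNneq k_neq => k_eq; apply/eqP/val_inj.
Qed.

Lemma accuracy_eq1 m (f : 'cV[R]_p -> 'cV[R]_p) :
  (forall s : m.-tuple 'I_p, correct (f (sampleX R s)) (sampleY s)) -> accuracy m f = 1.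
Proof.
move=> all_correct; rewrite /accuracy (eq_bigr (fun _ => 1)) => [|s _]; last first.
  by rewrite all_correct.
by rewrite sumr_const card_tuple card_ord divff // pnatr_eq0 -lt0n expn_gt0 p_gt0.
Qed.

Lemma sampleY_cons m (s : m.+1.-tuple 'I_p) :
  sampleY s = ((thead s + \sum_(i < m) tnth [tuple of behead s] i) %% p)%N.
Proof.
rewrite /sampleY big_ord_recl; congr ((_ + _) %% p)%N.
apply: eq_bigr => i _; rewrite tnth_behead; congr (nat_of_ord (tnth s _)).
by apply: val_inj; rewrite /= inordK // ltnS.
Qed.

Lemma card_sampleY_eq m r :
  (#|[set s : m.+1.-tuple 'I_p | sampleY s == r]| <= p ^ m)%N.
Proof.
set A := [set s : m.+1.-tuple 'I_p | sampleY s == r].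
have behead_inj : {in A &, injective (fun s : m.+1.-tuple 'I_p => [tuple of behead s])}.
  move=> s1 s2; rewrite !inE => /eqP Y1 /eqP Y2 eq_tl.
  have eq_hd : thead s1 = thead s2.
    move: Y2; rewrite -Y1 !sampleY_cons eq_tl => /eqP.
    by rewrite eqn_modDr !modn_small ?ltn_ord // => /eqP /val_inj.
  rewrite (tuple_eta s1) (tuple_eta s2) eq_hd; apply: val_inj => /=.
  by have /= -> := congr1 val eq_tl.
rewrite -(card_in_imset behead_inj).
by apply: leq_trans (max_card _) _; rewrite card_tuple card_ord.
Qed.

Lemma card_sampleY_in m (rs : seq nat) :
  (#|[set s : m.+1.-tuple 'I_p | sampleY s \in rs]| <= size rs * p ^ m)%N.
Proof.
elim: rs => [|r rs IH].
  by rewrite leqn0 cards_eq0; apply/eqP/setP => s; rewrite !inE.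
rewrite (_ : [set _ | _] = [set s : m.+1.-tuple 'I_p | sampleY s == r] :|:
      [set s : m.+1.-tuple 'I_p | sampleY s \in rs]); last first.
  by apply/setP => s; rewrite !inE.
by apply: leq_trans (leq_card_setU _ _) _; rewrite mulSn leq_add ?card_sampleY_eq.
Qed.

Lemma accuracy_ge m (f : 'cV[R]_p -> 'cV[R]_p) (rs : seq nat) : (0 < m)%N ->
  (forall s : m.-tuple 'I_p, sampleY s \notin rs -> correct (f (sampleX R s)) (sampleY s)) ->
  1 - (size rs)%:R / p%:R <= accuracy m f.
Proof.
case: m => // m _ good_correct.
set N := (\sum_(s : m.+1.-tuple 'I_p) (correct (f (sampleX R s)) (sampleY s) : nat))%N.
set bad := [set s : m.+1.-tuple 'I_p | sampleY s \in rs].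
have good_le : (#|~: bad| <= N)%N.
  rewrite -sum1dep_card big_mkcond /=; apply: leq_sum => s _.
  by case: ifP => //; rewrite !inE => /good_correct ->.
have total : (p ^ m.+1 <= N + size rs * p ^ m)%N.
  have card_all : #|{: m.+1.-tuple 'I_p}| = (p ^ m.+1)%N by rewrite card_tuple card_ord.
  by rewrite -card_all -(cardsC bad) addnC leq_add ?card_sampleY_in.
have pm_gt0 : 0 < (p ^ m)%:R :> R by rewrite ltr0n expn_gt0 p_gt0.
have p_gt0R : 0 < p%:R :> R by rewrite ltr0n.
rewrite /accuracy -natr_sum -/N expnS natrM ler_pdivlMr ?mulr_gt0 //.
move: total; rewrite -(ler_nat R) expnS !natrD !natrM.
rewrite mulrBl mul1r mulrA divfK ?gt_eqF //; lra.
Qed.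

End Accuracy.

Section Networks.
Variables (R : realType) (p : nat).
Hypothesis p_gt0 : (0 < p)%N.

Lemma mulmx_sampleX k m (W : 'M[R]_(k, p)) (s : m.-tuple 'I_p) i :
  (W *m sampleX R s) i ord0 = \sum_(j < m) W i (tnth s j).
Proof.
by rewrite /sampleX mulmx_sumr summxE; apply: eq_bigr => j _; rewrite /e_vec -colE mxE.
Qed.

Definition W_bias : 'M[R]_(2, p) := \matrix_(i, r) theta R p r.
Definition b_bias : 'cV[R]_2 := \col_(i < 2) (if i == 0 :> nat then 0 else pi / 2).
Definition V_bias : 'M[R]_(p, 2) :=
  \matrix_(l, i) (if i == 0 :> nat then sin (theta R p l) else cos (theta R p l)).

Lemma net_bias_sampleX m (s : m.-tuple 'I_p) (l : 'I_p) :
  net_bias W_bias V_bias b_bias (sampleX R s) l ord0 = cos (theta R p l - theta R p (sampleY s)).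
Proof.
have hidden i : sin_mx (W_bias *m sampleX R s + b_bias) i ord0 =
    sin (theta R p (sampleY s) + b_bias i ord0).
  rewrite mxE mxE mulmx_sampleX (eq_bigr (fun j => theta R p (tnth s j))) => [|j _]; last first.
    by rewrite mxE.
  by rewrite -theta_sum theta_modn // -addrA [_ *+ _ + _]addrC addrA (periodicn (@sinD2pi R)).
rewrite /net_bias mxE !big_ord_recl big_ord0 addr0 !hidden !mxE /=.
by rewrite addr0 sinDpihalf cosB addrC.
Qed.

Lemma accuracy_net_bias m : accuracy m (net_bias W_bias V_bias b_bias) = 1.
Proof.
apply: accuracy_eq1 => // s.
have y_lt : (sampleY s < p)%N by rewrite ltn_pmod.
apply: (correct_argmax (y_lt := y_lt)) => k k_neq.
by rewrite !net_bias_sampleX subrr cos0 cos_theta_subr_lt1.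
Qed.

Definition W_nobias d : 'M[R]_(d, p) := \matrix_(i, r) theta R p (i.+1 * r).
Definition V_nobias d : 'M[R]_(p, d) := \matrix_(l, i)
  (Num.sg (sin (theta R p l)) *
     (if i == 0 :> nat then 3 - cos (theta R p l) ^+ 2
      else if i == 1 :> nat then cos (theta R p l) else 0)).

Lemma net_nobias_sampleX d m (s : m.-tuple 'I_p) (l : 'I_p) : (0 < d)%N ->
  net_nobias (W_nobias d) (V_nobias d) (sampleX R s) l ord0 =
  nobias_score (1 < d)%N (sin (theta R p l)) (cos (theta R p l))
    (sin (theta R p (sampleY s))) (cos (theta R p (sampleY s))).
Proof.
have hidden i : sin_mx (W_nobias d *m sampleX R s) i ord0 = sin (theta R p (i.+1 * sampleY s)).
  rewrite mxE mulmx_sampleX (eq_bigr (fun j => theta R p (i.+1 * tnth s j))) => [|j _]; last first.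
    by rewrite mxE.
  by rewrite -theta_sum -big_distrr /=; apply: sin_theta_eqmod; rewrite // /sampleY modnMmr.
case: d hidden => [|[|d]] // hidden _; rewrite /net_nobias mxE !big_ord_recl !hidden !mxE /=.
  by rewrite big_ord0 /nobias_score /= !mul1n; ring.
rewrite big1 => [|i _]; last by rewrite mxE /= mulr0 mul0r.
by rewrite mul1n thetaM mulr_natl sin_mulr2n mulr2n /nobias_score /=; ring.
Qed.

Lemma correct_net_nobias m (s : m.-tuple 'I_p) : sampleY s != 0%N -> (sampleY s).*2 != p ->
  correct (net_nobias (W_nobias (p.-1)./2) (V_nobias (p.-1)./2) (sampleX R s)) (sampleY s).
Proof.
move=> y_neq0 y2_neq; have y_lt : (sampleY s < p)%N by rewrite ltn_pmod.
have Sy_neq0 : sin (theta R p (sampleY s)) != 0 by rewrite sin_theta_neq0 // y_neq0.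
have d_gt0 : (0 < (p.-1)./2)%N by lia.
apply: (correct_argmax (y_lt := y_lt)) => k k_neq; rewrite !net_nobias_sampleX //.
apply: nobias_score_lt; rewrite ?cos_sqr_le1 // => eq_sg.
have [p_gt4 cos_neq] := sgr_sin_theta_eq p_gt0 (ltn_ord k) y_lt k_neq Sy_neq0 eq_sg.
by split; first lia.
Qed.

End Networks.

Theorem mainTheorem2 (R : realType) (p : nat) (hp : (2 <= p)%N) :
  (exists (W : 'M[R]_(2, p)) (V : 'M[R]_(p, 2)) (b : 'cV[R]_2),
     forall m : nat, (2 <= m)%N -> accuracy m (net_bias W V b) = 1)
  /\
  (exists (W : 'M[R]_((p.-1)./2, p)) (V : 'M[R]_(p, (p.-1)./2)),
     forall m : nat, (2 <= m)%N ->
       (odd p -> 1 - p%:R^-1 <= accuracy m (net_nobias W V)) /\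
       (~~ odd p -> 1 - 2 / p%:R <= accuracy m (net_nobias W V))).
Proof.
have p_gt0 : (0 < p)%N by apply: leq_trans hp.
split.
  by exists (W_bias R p), (V_bias R p), (b_bias R) => m _; apply: accuracy_net_bias.
exists (W_nobias R p _), (V_nobias R p _) => m m_ge2.
have m_gt0 : (0 < m)%N by apply: leq_trans m_ge2.
split => [p_odd | _].
  rewrite -div1r; apply: (accuracy_ge p_gt0 (rs := [:: 0%N])) => // s.
  rewrite inE => y_neq0; apply: correct_net_nobias => //.
  by apply: contraTneq p_odd => <-; rewrite odd_double.
apply: (accuracy_ge p_gt0 (rs := [:: 0%N; p./2])) => // s.
rewrite !inE negb_or => /andP[y_neq0 y_neq_half]; apply: correct_net_nobias => //.
by apply: contraNneq y_neq_half => y2_eq; apply/eqP; lia.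
Qed.
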